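(* The space $X_{\mathrm{crs}}$ is Hausdorff but not paracompact.
   Context: Let $X$ be the following 2-dimensional CW-complex. Its 0-cells are $e_n^0$, $n\ge 0$; the point $x=e_0^0$ is called the origin. For each $n\ge1$ there are two 1-cells $e_n^1, e_{-n}^1$, each joining $x$ to $e_n^0$, so that $e_0^0\cup e_n^0\cup e_n^1\cup e_{-n}^1$ is homeomorphic to a circle; for each $n\ge1$ a 2-cell $e_n^2$ is attached via a homeomorphism $\varphi_n:S^1\to e_0^0\cup e_n^0\cup e_n^1\cup e_{-n}^1$. Thus each closed 2-cell $\overline{e_n^2}$ is a closed disk having $x$ and $e_n^0$ on its boundary, and $X$ is a wedge at $x$ of countably many closed disks, carrying the CW (weak) topology. The coarser topology on the set $X$ consists of all subsets $U\subset X$ that are open in the CW-topology and either do not contain $x$, or contain $\overline{e_n^2}\smallsetminus e_n^0$ for all but finitely many $n\ge1$. The set $X$ with this coarser topology is denoted $X_{\mathrm{crs}}$. A space is paracompact if it is Hausdorff and every open cover has a locally finite open refinement. *)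

From Stdlib Require Import Reals List.
Open Scope R_scope.

Definition hausdorff {T : Type} (op : (T -> Prop) -> Prop) : Prop :=
  forall x y : T, x <> y ->
    exists U V : T -> Prop, op U /\ op V /\ U x /\ V y /\
      (forall z, ~ (U z /\ V z)).

Definition open_cover {T : Type} (op : (T -> Prop) -> Prop)
    (I : Type) (U : I -> T -> Prop) : Prop :=
  (forall i, op (U i)) /\ (forall x, exists i, U i x).

Definition refines {T : Type} {I J : Type}
    (V : J -> T -> Prop) (U : I -> T -> Prop) : Prop :=
  forall j, exists i, forall x, V j x -> U i x.

Definition locally_finite {T : Type} (op : (T -> Prop) -> Prop)
    {J : Type} (V : J -> T -> Prop) : Prop :=
  forall x, exists W : T -> Prop, op W /\ W x /\
    exists l : list J, forall j, (exists z, W z /\ V j z) -> In j l.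

Definition paracompact {T : Type} (op : (T -> Prop) -> Prop) : Prop :=
  hausdorff op /\
  forall (I : Type) (U : I -> T -> Prop), open_cover op I U ->
    exists (J : Type) (V : J -> T -> Prop),
      open_cover op J V /\ refines V U /\ locally_finite op V.

(* Model closed disk D = {(a,b) | a^2+b^2 <= 1}; on its boundary the point
   (-1,0) is glued to the origin x and (1,0) is the vertex e_n^0. *)
Definition in_disk (p : R * R) : Prop := (fst p) ^ 2 + (snd p) ^ 2 <= 1.
Definition glue_pt : R * R := (-1, 0).
Definition vertex_pt : R * R := (1, 0).

Definition Dpunct : Type := { p : R * R | in_disk p /\ p <> glue_pt }.

(* Points of X: None is the origin x = e_0^0; Some (n, p) is the point p of
   the (n+1)-st closed disk (closure of e_{n+1}^2) other than the origin. *)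
Definition X : Type := option (nat * Dpunct).
Definition origin : X := None.

Definition pullback (U : X -> Prop) (n : nat) (p : R * R) : Prop :=
  (p = glue_pt /\ U origin) \/
  (exists h : in_disk p /\ p <> glue_pt, U (Some (n, exist _ p h))).

(* CW (weak) topology: U open iff its trace on every closed 2-cell is open
   in that closed disk (subspace topology from R^2). *)
Definition CW_open (U : X -> Prop) : Prop :=
  forall (n : nat) (p : R * R), in_disk p -> pullback U n p ->
    exists eps : R, 0 < eps /\
      forall q : R * R, in_disk q ->
        (fst q - fst p) ^ 2 + (snd q - snd p) ^ 2 < eps ^ 2 ->
        pullback U n q.

Definition crs_open (U : X -> Prop) : Prop :=
  CW_open U /\
  (U origin ->
     exists N : nat, forall n : nat, (N <= n)%nat ->
       forall p : Dpunct, proj1_sig p <> vertex_pt -> U (Some (n, p))).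

(* Hausdorff: points of different disks are separated by the two open disks
   minus the origin, points of one disk by small squares, and a point p of a
   disk from the origin by a square around p versus a neighbourhood of the
   origin made of a square around the glueing point and all other disks.

   Not paracompact: cover X by the open disks minus the origin (cell n) and
   the complement of all vertices e_n^0.  In a refinement, the member
   containing e_n^0 lies in cell n, so these members are pairwise distinct.
   Every neighbourhood of the origin contains almost all disks minus their
   vertices, hence meets all but finitely many of these members: local
   finiteness fails at the origin. *)

From Stdlib Require Import Reals List.
From Stdlib Require Import Lra Lia Classical IndefiniteDescription ProofIrrelevance.
Open Scope R_scope.

Definition square (c : R * R) (r : R) (q : R * R) : Prop :=
  Rabs (fst q - fst c) < r /\ Rabs (snd q - snd c) < r.

Definition plane_open (S : R * R -> Prop) : Prop :=
  forall p, S p -> exists r, 0 < r /\ forall q, square p r q -> S q.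

Lemma square_center c r : 0 < r -> square c r c.
Proof.
  intros Hr. unfold square. rewrite !Rminus_diag, Rabs_R0. lra.
Qed.

Lemma square_mono c r r' q : r <= r' -> square c r q -> square c r' q.
Proof. unfold square. lra. Qed.

(* The Euclidean ball of radius r lies inside the square of half-side r;
   this converts square neighbourhoods into the balls used by [CW_open]. *)
Lemma ball_in_square c r q : 0 < r ->
  (fst q - fst c) ^ 2 + (snd q - snd c) ^ 2 < r ^ 2 -> square c r q.
Proof.
  unfold square. generalize (fst q - fst c) (snd q - snd c). intros x y Hr H.
  split; unfold Rabs; destruct (Rcase_abs _); nra.
Qed.

Lemma square_open c r : plane_open (square c r).
Proof.
  intros p [H1 H2].
  set (s := Rmin (r - Rabs (fst p - fst c)) (r - Rabs (snd p - snd c))).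
  assert (Hs1 : s <= r - Rabs (fst p - fst c)) by apply Rmin_l.
  assert (Hs2 : s <= r - Rabs (snd p - snd c)) by apply Rmin_r.
  exists s. split; [apply Rmin_pos; lra|].
  intros q [A B]. split.
  - pose proof (Rabs_triang (fst q - fst p) (fst p - fst c)).
    replace (fst q - fst p + (fst p - fst c)) with (fst q - fst c) in * by ring.
    lra.
  - pose proof (Rabs_triang (snd q - snd p) (snd p - snd c)).
    replace (snd q - snd p + (snd p - snd c)) with (snd q - snd c) in * by ring.
    lra.
Qed.

Lemma squares_disjoint c d : c <> d ->
  exists r, 0 < r /\ forall z, ~ (square c r z /\ square d r z).
Proof.
  assert (Hsep : forall a b z r, Rabs (a - b) = 2 * r ->
            Rabs (z - a) < r -> Rabs (z - b) < r -> False)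
    by (intros a b z r; unfold Rabs; repeat destruct (Rcase_abs _); lra).
  destruct c as [c1 c2], d as [d1 d2]. intros Hcd. unfold square; simpl.
  destruct (Req_dec c1 d1) as [<-|N1].
  - assert (N2 : c2 <> d2) by congruence.
    exists (Rabs (c2 - d2) / 2).
    split; [pose proof (Rabs_pos_lt _ (Rminus_eq_contra _ _ N2)); lra|].
    intros z [[_ A] [_ B]]. apply (Hsep c2 d2 (snd z) (Rabs (c2 - d2) / 2)); lra.
  - exists (Rabs (c1 - d1) / 2).
    split; [pose proof (Rabs_pos_lt _ (Rminus_eq_contra _ _ N1)); lra|].
    intros z [[A _] [B _]]. apply (Hsep c1 d1 (fst z) (Rabs (c1 - d1) / 2)); lra.
Qed.

Lemma plane_open_ext S T : (forall q, S q <-> T q) -> plane_open T -> plane_open S.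
Proof.
  intros E HT p Hp. apply E in Hp. destruct (HT p Hp) as [r [Hr Hq]].
  exists r. split; [exact Hr|]. intros q H. apply E, Hq, H.
Qed.

Lemma plane_open_const (P : Prop) : plane_open (fun _ => P).
Proof. intros p Hp. exists 1. split; [lra|auto]. Qed.

Lemma plane_open_and S T :
  plane_open S -> plane_open T -> plane_open (fun q => S q /\ T q).
Proof.
  intros HS HT p [Hs Ht].
  destruct (HS p Hs) as [r1 [H1 K1]], (HT p Ht) as [r2 [H2 K2]].
  exists (Rmin r1 r2). split; [apply Rmin_pos; assumption|].
  intros q Hq. split.
  - apply K1, (square_mono _ _ _ _ (Rmin_l r1 r2) Hq).
  - apply K2, (square_mono _ _ _ _ (Rmin_r r1 r2) Hq).
Qed.

Lemma plane_open_neq c : plane_open (fun q => q <> c).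
Proof.
  intros p Hp. destruct (squares_disjoint p c Hp) as [r [Hr Hd]].
  exists r. split; [exact Hr|]. intros q Hq ->. apply (Hd c).
  split; [exact Hq|apply square_center, Hr].
Qed.

Definition X_set (b : Prop) (F : nat -> R * R -> Prop) : X -> Prop :=
  fun z => match z with None => b | Some (n, p) => F n (proj1_sig p) end.

Lemma pullback_X_set b F n q : pullback (X_set b F) n q <->
  (q = glue_pt /\ b) \/ (in_disk q /\ q <> glue_pt /\ F n q).
Proof.
  unfold pullback, X_set, origin; simpl. split.
  - intros [H|[[h1 h2] H]]; [left; exact H|right; simpl in H; tauto].
  - intros [H|(H1 & H2 & H3)]; [left; exact H|right].
    exists (conj H1 H2). exact H3.
Qed.

Lemma crs_open_X_set b F :
  (forall n, plane_open (fun q => (q = glue_pt /\ b) \/ (q <> glue_pt /\ F n q))) ->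
  (b -> exists N, forall n, (N <= n)%nat -> forall q, q <> vertex_pt -> F n q) ->
  crs_open (X_set b F).
Proof.
  intros Hplane Hfar. split.
  - intros n p _ Hp. apply pullback_X_set in Hp.
    destruct (Hplane n p) as [r [Hr Hsq]]; [tauto|].
    exists r. split; [exact Hr|]. intros q Hq Hball.
    apply pullback_X_set.
    destruct (Hsq q (ball_in_square _ _ _ Hr Hball)); tauto.
  - intros Hb. destruct (Hfar Hb) as [N HN]. exists N.
    intros n Hn p Hp. apply HN; assumption.
Qed.

Lemma glue_ne_vertex : glue_pt <> vertex_pt.
Proof. unfold glue_pt, vertex_pt. intro E. injection E. lra. Qed.

Definition cell_square (n : nat) (c : R * R) (r : R) : X -> Prop :=
  X_set False (fun k q => k = n /\ square c r q).

Definition cell (n : nat) : X -> Prop := X_set False (fun k _ => k = n).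

Definition off_vertices : X -> Prop := X_set True (fun _ q => q <> vertex_pt).

Lemma cell_square_open n c r : crs_open (cell_square n c r).
Proof.
  apply crs_open_X_set; [|tauto]. intros k.
  apply (plane_open_ext _ (fun q => q <> glue_pt /\ (k = n /\ square c r q)));
    [intros q; tauto|].
  apply plane_open_and; [apply plane_open_neq|].
  apply plane_open_and; [apply plane_open_const|apply square_open].
Qed.

Lemma cell_open n : crs_open (cell n).
Proof.
  apply crs_open_X_set; [|tauto]. intros k.
  apply (plane_open_ext _ (fun q => q <> glue_pt /\ k = n)); [intros q; tauto|].
  apply plane_open_and; [apply plane_open_neq|apply plane_open_const].
Qed.

Lemma off_vertices_open : crs_open off_vertices.
Proof.
  apply crs_open_X_set.
  - intros k. apply (plane_open_ext _ (fun q => q <> vertex_pt));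
      [|apply plane_open_neq].
    intros q. split.
    + intros [[-> _]|[_ H]]; [apply glue_ne_vertex|exact H].
    + intros H. destruct (classic (q = glue_pt)); tauto.
  - intros _. exists 0%nat. auto.
Qed.

Definition separated (U V : X -> Prop) : Prop := forall z, ~ (U z /\ V z).

(* A point of the n-th disk is separated from the origin by a square around
   it and by a neighbourhood of the origin consisting of a square around the
   glueing point in disk n together with all other disks minus vertices. *)
Lemma separate_from_origin n (p : Dpunct) : exists U V : X -> Prop,
  crs_open U /\ crs_open V /\ U origin /\ V (Some (n, p)) /\ separated U V.
Proof.
  assert (Hc : glue_pt <> proj1_sig p) by (destruct (proj2_sig p); auto).
  destruct (squares_disjoint _ _ Hc) as [r [Hr Hd]].
  exists (X_set True (fun k q => (k <> n /\ q <> vertex_pt) \/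
                                (k = n /\ square glue_pt r q))),
         (cell_square n (proj1_sig p) r).
  split; [|split; [apply cell_square_open|split; [exact I|split]]].
  - apply crs_open_X_set.
    + intros k. destruct (Nat.eq_dec k n) as [->|Hk].
      * apply (plane_open_ext _ (square glue_pt r)); [|apply square_open].
        intros q. split.
        -- intros [[-> _]|[_ [[H _]|[_ H]]]];
             [apply square_center, Hr|congruence|exact H].
        -- intros H. destruct (classic (q = glue_pt)); tauto.
      * apply (plane_open_ext _ (fun q => q <> vertex_pt)); [|apply plane_open_neq].
        intros q. split.
        -- intros [[-> _]|[_ [[_ H]|[H _]]]];
             [apply glue_ne_vertex|exact H|congruence].
        -- intros H. destruct (classic (q = glue_pt)); tauto.
    + intros _. exists (S n). intros m Hm q Hq. left. split; [lia|exact Hq].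
  - split; [reflexivity|apply square_center, Hr].
  - intros [[k w]|] [HU HV]; simpl in *; [|exact HV].
    destruct HV as [-> HV]. destruct HU as [[H _]|[_ H]]; [congruence|].
    apply (Hd (proj1_sig w)). split; assumption.
Qed.

Lemma Dpunct_eq (p q : Dpunct) : proj1_sig p = proj1_sig q -> p = q.
Proof. destruct p, q; simpl; intros ->. f_equal. apply proof_irrelevance. Qed.

Lemma crs_hausdorff : hausdorff crs_open.
Proof.
  intros [[n p]|] [[m q]|] Hxy.
  - destruct (Nat.eq_dec n m) as [<-|Hnm].
    +
      assert (Hpq : proj1_sig p <> proj1_sig q)
        by (intro E; apply Hxy; rewrite (Dpunct_eq _ _ E); reflexivity).
      destruct (squares_disjoint _ _ Hpq) as [r [Hr Hd]].
      exists (cell_square n (proj1_sig p) r), (cell_square n (proj1_sig q) r).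
      split; [apply cell_square_open|split; [apply cell_square_open|]].
      split; [split; [reflexivity|apply square_center, Hr]|].
      split; [split; [reflexivity|apply square_center, Hr]|].
      intros [[k w]|] [HU HV]; simpl in *; [|exact HV].
      apply (Hd (proj1_sig w)); tauto.
    +
      exists (cell n), (cell m).
      split; [apply cell_open|split; [apply cell_open|]].
      split; [reflexivity|split; [reflexivity|]].
      intros [[k w]|] [HU HV]; simpl in *; [congruence|exact HV].
  - destruct (separate_from_origin n p) as (U & V & HU & HV & HUo & HVp & Hsep).
    exists V, U. do 4 (split; [assumption|]).
    intros z [A B]. exact (Hsep z (conj B A)).
  - exact (separate_from_origin m q).
  - congruence.
Qed.

Lemma vertex_in_Dpunct : in_disk vertex_pt /\ vertex_pt <> glue_pt.
Proof.
  split; [unfold in_disk, vertex_pt; simpl; lra|].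
  intro E. apply glue_ne_vertex. symmetry. exact E.
Qed.

Definition vertex (n : nat) : X := Some (n, exist _ vertex_pt vertex_in_Dpunct).

(* The vertex of a disk is a limit of non-vertex points of that disk:
   a CW-open set containing it contains a point (1 - t, 0) next to it. *)
Lemma CW_open_near_vertex U n : CW_open U -> U (vertex n) ->
  exists p : Dpunct, proj1_sig p <> vertex_pt /\ U (Some (n, p)).
Proof.
  intros HU Hv.
  destruct (HU n vertex_pt (proj1 vertex_in_Dpunct)) as [e [He Hball]].
  { right. exists vertex_in_Dpunct. exact Hv. }
  set (t := Rmin (e / 2) 1).
  assert (Ht1 : t <= e / 2) by apply Rmin_l.
  assert (Ht2 : t <= 1) by apply Rmin_r.
  assert (Ht0 : 0 < t) by (apply Rmin_pos; lra).
  assert (Hq : in_disk (1 - t, 0)) by (unfold in_disk; simpl; nra).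
  destruct (Hball (1 - t, 0) Hq) as [[E _]|[h Hz]].
  - unfold vertex_pt; simpl; nra.
  - unfold glue_pt in E. injection E. lra.
  - exists (exist _ (1 - t, 0) h). split; [|exact Hz].
    simpl. unfold vertex_pt. intro E. injection E. lra.
Qed.

Lemma injective_not_eventually_in {J : Type} (f : nat -> J) (N : nat) (l : list J) :
  (forall n m, f n = f m -> n = m) -> (forall n, (N <= n)%nat -> In (f n) l) -> False.
Proof.
  intros Hinj Hin.
  set (s := map f (seq N (S (length l)))).
  assert (Hnd : NoDup s).
  { apply NoDup_map_NoDup_ForallPairs; [|apply seq_NoDup].
    intros a b _ _. apply Hinj. }
  assert (Hincl : incl s l).
  { intros y Hy. apply in_map_iff in Hy as [n [<- Hn]].
    apply in_seq in Hn. apply Hin. lia. }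
  pose proof (NoDup_incl_length Hnd Hincl) as Hlen.
  unfold s in Hlen. rewrite length_map, length_seq in Hlen. lia.
Qed.

Definition vertex_cover (i : option nat) : X -> Prop :=
  match i with None => off_vertices | Some n => cell n end.

Lemma vertex_cover_open_cover : open_cover crs_open (option nat) vertex_cover.
Proof.
  split.
  - intros [n|]; [apply cell_open|apply off_vertices_open].
  - intros [[m p]|]; [|exists None; exact I].
    destruct (classic (proj1_sig p = vertex_pt)).
    + exists (Some m). reflexivity.
    + exists None. assumption.
Qed.

(* In a refinement of [vertex_cover], some member containing the n-th vertex
   lies inside cell n, since [off_vertices] misses that vertex. *)
Lemma refinement_at_vertex {J : Type} (V : J -> X -> Prop) :
  (forall x, exists j, V j x) -> refines V vertex_cover ->
  forall n, exists j, V j (vertex n) /\ forall z, V j z -> cell n z.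
Proof.
  intros Hcov Href n. destruct (Hcov (vertex n)) as [j Hj].
  exists j. split; [exact Hj|].
  destruct (Href j) as [[m|] Hsub].
  - pose proof (Hsub _ Hj) as Hm. simpl in Hm. subst m. exact Hsub.
  - exfalso. apply (Hsub _ Hj). reflexivity.
Qed.

Lemma crs_not_paracompact : ~ paracompact crs_open.
Proof.
  intros [_ Hpara].
  destruct (Hpara _ _ vertex_cover_open_cover)
    as (J & V & [Vopen Vcov] & Vref & Vlf).
  destruct (functional_choice _ (refinement_at_vertex V Vcov Vref))
    as [f Hf].
  (* distinct vertices lie in distinct members, as the cells are disjoint *)
  assert (Hinj : forall n m, f n = f m -> n = m).
  { intros n m E. destruct (Hf m) as [Hm _]. rewrite <- E in Hm.
    symmetry. exact (proj2 (Hf n) _ Hm). }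
  destruct (Vlf origin) as (W & HW & HWo & l & Hl).
  destruct (proj2 HW HWo) as [N HN].
  apply (injective_not_eventually_in f N l Hinj).
  intros n Hn. apply Hl.
  destruct (CW_open_near_vertex _ n (proj1 (Vopen (f n))) (proj1 (Hf n)))
    as [p [Hp HVp]].
  exists (Some (n, p)). split; [exact (HN n Hn p Hp)|exact HVp].
Qed.

Theorem proposition1p1 : hausdorff crs_open /\ ~ paracompact crs_open.
Proof. split; [exact crs_hausdorff|exact crs_not_paracompact]. Qed.
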